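(* Let $R$ be a ring, and let $A$ and $B$ be $R$-algebras that are integral domains. Assume that $A$ is of finite expansion over $R$ and that $B$ is normal, and let $\mathfrak{p} \subset B$ be a prime ideal. Let $\phi: A \to B_\mathfrak{p}$ be a homomorphism of $R$-algebras. Then there exists $f \in B \setminus \mathfrak{p}$ such that $\phi$ factors as $A \to B_f \to B_\mathfrak{p}$, where $B_f \to B_\mathfrak{p}$ is the canonical localization map.
   Context: An $R$-algebra $A$ is of finite expansion over $R$ if there exist finitely many elements $a_1,\dots,a_n \in A$ such that $A$ is integral over the subalgebra $R[a_1,\dots,a_n]$. A domain is normal if it is integrally closed in its field of fractions. *)

From HB Require Import structures.
From mathcomp Require Import all_boot all_order all_algebra.
From mathcomp Require Import fraction ring_quotient.
Set Implicit Arguments. Unset Strict Implicit. Unset Printing Implicit Defensive.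
Import GRing.Theory.
Local Open Scope ring_scope.

(* An R-algebra A is encoded by its structure morphism iA : R -> A. *)

Inductive gen_subalg (R : comNzRingType) (A : comNzRingType)
    (iA : {rmorphism R -> A}) (n : nat) (a : 'I_n -> A) : A -> Prop :=
  | gen_scalar r : gen_subalg iA a (iA r)
  | gen_var i : gen_subalg iA a (a i)
  | gen_add x y : gen_subalg iA a x -> gen_subalg iA a y -> gen_subalg iA a (x + y)
  | gen_opp x : gen_subalg iA a x -> gen_subalg iA a (- x)
  | gen_mul x y : gen_subalg iA a x -> gen_subalg iA a y -> gen_subalg iA a (x * y).

Definition integral_over_subring (A : comNzRingType) (S : A -> Prop) (x : A) : Prop :=
  exists2 q : {poly A}, (q \is monic) /\ (forall i, S q`_i) & root q x.

Definition finite_expansion (R A : comNzRingType) (iA : {rmorphism R -> A}) : Prop :=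
  exists n (a : 'I_n -> A), forall x : A, integral_over_subring (gen_subalg iA a) x.

Definition normal_domain (B : idomainType) : Prop :=
  forall x : {fraction B}, integralOver (@FracField.tofrac B) x -> exists b : B, x = FracField.tofrac b.

(* Localization B_p of a domain B at a prime p, realized as the subring
   {b/s | s \notin p} of the fraction field of B. *)
Definition in_loc_prime (B : idomainType) (p : {pred B}) (x : {fraction B}) : Prop :=
  exists b s : B, s \notin p /\ x = FracField.tofrac b / FracField.tofrac s.

(* Localization B_f = B[1/f], realized as the subring {b/f^n} of Frac(B). *)
Definition in_loc_elem (B : idomainType) (f : B) (x : {fraction B}) : Prop :=
  exists (b : B) (n : nat), x = FracField.tofrac b / FracField.tofrac (f ^+ n).

From HB Require Import structures.
From mathcomp Require Import all_boot all_order all_algebra.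
From mathcomp Require Import fraction ring_quotient.
From mathcomp Require Import ring.
Set Implicit Arguments. Unset Strict Implicit. Unset Printing Implicit Defensive.
Import GRing.Theory.
Local Open Scope ring_scope.

(* Write phi(a_i) = b_i / s_i with s_i outside p and put f = s_1 ... s_n, so
   that phi maps R[a_1, ..., a_n] into B_f.  Every a in A is a root of a monic
   polynomial over R[a_1, ..., a_n], so phi(a) is a root of a monic polynomial
   with coefficients in B_f.  Clearing denominators, f^M phi(a) is a root of a
   monic polynomial over B, hence lies in B because B is normal; thus phi(a)
   lies in B_f. *)

Lemma integral_exp (R K : comNzRingType) (RtoK : {rmorphism R -> K}) (x : K) k :
  integralOver RtoK x -> integralOver RtoK (x ^+ k).
Proof.
move=> intx; elim: k => [|k IHk]; first by rewrite expr0; apply: integral1.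
by rewrite exprS; apply: integral_mul.
Qed.

(* If y is a root of the monic Q = \sum_(i <= d) q_i X^i, then G y is a root of
   the monic \sum_(i <= d) G^(d - i) q_i X^i, whose coefficients are integral. *)
Lemma integral_scaled_root (R K : comNzRingType) (RtoK : {rmorphism R -> K})
    (Q : {poly K}) (G y : K) :
    Q \is monic -> root Q y -> integralOver RtoK G ->
    (forall i, integralOver RtoK (G * Q`_i)) ->
  integralOver RtoK (G * y).
Proof.
move=> monQ rootQy intG intGQ.
set d := (size Q).-1.
have sizeQ_gt0 : (0 < size Q)%N by rewrite size_poly_gt0 monic_neq0.
have lt_d : (d < size Q)%N by rewrite /d ltn_predL.
have le_d i : (i < size Q)%N -> (i <= d)%N by move=> lt_i_Q; rewrite -ltnS /d prednK.
have Qd : Q`_d = 1 by have := monicP monQ; rewrite lead_coefE.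
pose Q' := \poly_(i < size Q) (G ^+ (d - i) * Q`_i).
have Q'd : Q'`_d = 1 by rewrite coef_poly lt_d subnn expr0 mul1r.
have sizeQ' : size Q' = size Q by apply: size_poly_eq; rewrite subnn mul1r Qd oner_neq0.
have monQ' : Q' \is monic by apply/monicP; rewrite lead_coefE sizeQ'; exact: Q'd.
have rootQ' : root Q' (G * y).
  rewrite /root horner_poly.
  rewrite (eq_bigr (fun i : 'I_(size Q) => G ^+ d * (Q`_i * y ^+ i))).
    by rewrite -mulr_sumr -horner_coef (eqP rootQy) mulr0.
  move=> i _; rewrite exprMn -{2}(subnK (le_d i (ltn_ord i))) exprD; ring.
apply: integral_root_monic monQ' rootQ' _; apply/integral_poly => i.
rewrite coef_poly; case: ltnP => [lt_i_Q|_]; last exact: integral0.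
have [->|lt_i_d] := eqVneq i d; first by rewrite subnn mul1r Qd; apply: integral1.
have -> : (d - i = (d - i).-1.+1)%N.
  by rewrite prednK // subn_gt0 ltn_neqAle lt_i_d le_d.
by rewrite exprSr -mulrA; apply: integral_mul; [apply: integral_exp|].
Qed.

Lemma prod_notin_prime (R : comNzRingType) (p : {pred R}) (I : Type)
    (r : seq I) (P : pred I) (F : I -> R) :
    1 \notin p -> prime_idealr_closed p -> (forall i, P i -> F i \notin p) ->
  \prod_(i <- r | P i) F i \notin p.
Proof.
move=> p1 p_prime Fp; apply: (big_ind (fun x => x \notin p)) => // x y xp yp.
by apply/negP => /p_prime/orP[]; apply/negP.
Qed.

Section PowerDenominators.

Variable B : idomainType.
Local Notation tofrac := (@FracField.tofrac B).

(* [pow_denom f x] says that x lies in B_f; unlike [in_loc_elem] it involves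
   no division, so it behaves well even when f = 0. *)
Definition pow_denom (f : B) (x : {fraction B}) :=
  exists m (b : B), tofrac f ^+ m * x = tofrac b.

Variable f : B.

Lemma pow_denom_tofrac b : pow_denom f (tofrac b).
Proof. by exists 0%N, b; rewrite expr0 mul1r. Qed.

Lemma pow_denomD x y : pow_denom f x -> pow_denom f y -> pow_denom f (x + y).
Proof.
move=> [m1 [b1 Ex]] [m2 [b2 Ey]]; exists (m1 + m2)%N, (f ^+ m2 * b1 + f ^+ m1 * b2).
rewrite tofracD !tofracM !tofracXn -Ex -Ey exprD; ring.
Qed.

Lemma pow_denomN x : pow_denom f x -> pow_denom f (- x).
Proof. by move=> [m [b E]]; exists m, (- b); rewrite mulrN E tofracN. Qed.

Lemma pow_denomM x y : pow_denom f x -> pow_denom f y -> pow_denom f (x * y).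
Proof.
move=> [m1 [b1 Ex]] [m2 [b2 Ey]]; exists (m1 + m2)%N, (b1 * b2).
rewrite exprD tofracM -Ex -Ey; ring.
Qed.

Lemma pow_denom_common (c : nat -> {fraction B}) n :
    (forall i, (i < n)%N -> pow_denom f (c i)) ->
  exists M, forall i, (i < n)%N -> exists b, tofrac f ^+ M * c i = tofrac b.
Proof.
elim: n => [|n IHn] c_den; first by exists 0%N.
have [M IH] := IHn (fun i lt_i_n => c_den i (ltnW lt_i_n)).
have [m [b E]] := c_den n (ltnSn n).
exists (M + m)%N => i; rewrite ltnS leq_eqVlt => /orP[/eqP ->|/IH[b' E']].
  by exists (f ^+ M * b); rewrite tofracM tofracXn -E exprD; ring.
by exists (f ^+ m * b'); rewrite tofracM tofracXn -E' exprD; ring.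
Qed.

Lemma pow_denom_frac (s g b : B) :
  s != 0 -> pow_denom (s * g) (tofrac b / tofrac s).
Proof.
move=> s_neq0; exists 1%N, (b * g).
have ts_neq0 : tofrac s != 0 by rewrite tofrac_eq0.
by rewrite expr1 !tofracM; field.
Qed.

Lemma pow_denom_in_loc_elem x : f != 0 -> pow_denom f x -> in_loc_elem f x.
Proof.
move=> f_neq0 [m [b E]]; exists b, m.
have fm_neq0 : tofrac f ^+ m != 0 by rewrite expf_neq0 // tofrac_eq0.
by rewrite tofracXn -E mulrC mulKf.
Qed.

Lemma pow_denom_root (Q : {poly {fraction B}}) y :
    normal_domain B -> Q \is monic -> (forall i, pow_denom f Q`_i) -> root Q y ->
  pow_denom f y.
Proof.
move=> normalB monQ Q_den rootQy.
have [M clearQ] := @pow_denom_common (fun i => Q`_i) (size Q) (fun i _ => Q_den i).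
have intGQ i : integralOver tofrac (tofrac f ^+ M * Q`_i).
  have [/clearQ[b ->]|le_Q_i] := ltnP i (size Q); first exact: integral_id.
  by rewrite nth_default // mulr0; apply: integral0.
have intG : integralOver tofrac (tofrac f ^+ M) by rewrite -tofracXn; apply: integral_id.
have [b Eb] := normalB _ (integral_scaled_root monQ rootQy intG intGQ).
by exists M, b.
Qed.

End PowerDenominators.

Lemma gen_subalg_pow_denom (R A : comNzRingType) (B : idomainType)
    (iA : {rmorphism R -> A}) (phi : {rmorphism A -> {fraction B}})
    n (a : 'I_n -> A) (f : B) :
    (forall r, pow_denom f (phi (iA r))) -> (forall i, pow_denom f (phi (a i))) ->
  forall x, gen_subalg iA a x -> pow_denom f (phi x).
Proof.
move=> scal_den var_den x; elim=> {x} [r|i|x y _ IHx _ IHy|x _ IHx|x y _ IHx _ IHy].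
- exact: scal_den.
- exact: var_den.
- by rewrite rmorphD; apply: pow_denomD.
- by rewrite rmorphN; apply: pow_denomN.
- by rewrite rmorphM; apply: pow_denomM.
Qed.

Theorem lemma1p11 (R : comNzRingType) (A B : idomainType)
    (iA : {rmorphism R -> A}) (iB : {rmorphism R -> B})
    (hA : finite_expansion iA) (hB : normal_domain B)
    (p : {pred B}) (hp_ideal : idealr_closed p) (hp_prime : prime_idealr_closed p)
    (phi : {rmorphism A -> {fraction B}})
    (phi_loc : forall a : A, in_loc_prime p (phi a))
    (phi_R : forall r : R, phi (iA r) = FracField.tofrac (iB r)) :
  exists2 f : B, f \notin p & forall a : A, in_loc_elem f (phi a).
Proof.
have [n [a intA]] := hA; have [p0 p1 _] := hp_ideal.
have neq0 x : x \notin p -> x != 0 by apply: contraNneq => ->.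
have /fin_all_exists[s s_den] i : exists s, s \notin p /\
    exists b, phi (a i) = FracField.tofrac b / FracField.tofrac s.
  by have [b [s [sp E]]] := phi_loc (a i); exists s; split; last exists b.
pose f := \prod_(i < n) s i.
have fp : f \notin p by apply: prod_notin_prime => // i _; case: (s_den i).
exists f => // x; apply: pow_denom_in_loc_elem; first exact: neq0.
have var_den i : pow_denom f (phi (a i)).
  have [sp [b ->]] := s_den i; rewrite /f (bigD1 i) //=.
  exact: pow_denom_frac (neq0 _ sp).
have scal_den r : pow_denom f (phi (iA r)) by rewrite phi_R; apply: pow_denom_tofrac.
have gen_den := gen_subalg_pow_denom scal_den var_den.
have [q [monq q_gen] rootqx] := intA x.
apply: (pow_denom_root hB (monic_map phi monq)) (rmorph_root phi rootqx) => i.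
by rewrite coef_map; apply: gen_den.
Qed.
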